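(* Let $A$ be an algebra of Jordan type half over a field $\mathbb{F}$ of characteristic zero. If $a,b\in A$ are primitive axes of Jordan type half with $(a,b)=0$ or $(a,b)=1$, then $J=\langle\langle a,b\rangle\rangle$ is solid.
   Context: All algebras are commutative but not necessarily associative. For an element $x$ of an algebra $A$ and $\lambda\in\mathbb{F}$ write $A_\lambda(x)=\{u\in A: xu=\lambda u\}$. A primitive axis of Jordan type half in $A$ is an element $x\neq 0$ with $x^2=x$, $A=A_1(x)\oplus A_0(x)\oplus A_{1/2}(x)$, $A_1(x)=\mathbb{F}x$, and the fusion rules $A_1A_1\subseteq A_1$, $A_1A_0=0$, $A_0A_0\subseteq A_0$, $A_1A_{1/2}\subseteq A_{1/2}$, $A_0A_{1/2}\subseteq A_{1/2}$, $A_{1/2}A_{1/2}\subseteq A_1\oplus A_0$ (eigenspaces of $x$). An algebra of Jordan type half is a commutative algebra generated by primitive axes of Jordan type half. Such an algebra has a unique Frobenius form $(\cdot,\cdot)$: a bilinear form with $(uv,w)=(u,vw)$ and $(x,x)=1$ for every primitive axis $x$. $\langle\langle a,b\rangle\rangle$ denotes the subalgebra generated by $a,b$. Such a subalgebra $J$ is solid if every idempotent $c\in J$ with $c\neq0$ and $c\neq 1_J$ (the identity of $J$, if $J$ has one) is a primitive axis of Jordan type half in $A$. *)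

From HB Require Import structures.
From mathcomp Require Import all_boot all_order all_algebra.
Set Implicit Arguments. Unset Strict Implicit. Unset Printing Implicit Defensive.
Import Order.TTheory GRing.Theory Num.Theory.
Local Open Scope ring_scope.

Section JordanHalf.
Variables (F : fieldType) (V : lmodType F) (mul : V -> V -> V).

Definition comm_algebra : Prop :=
  (forall u v, mul u v = mul v u) /\
  (forall (k : F) u v w, mul (k *: u + v) w = k *: mul u w + mul v w).

Definition eigsp (x : V) (lam : F) (u : V) : Prop := mul x u = lam *: u.

Definition half : F := 2%:R^-1.

Definition primitive_axis (x : V) : Prop :=
  [/\ x <> 0, mul x x = x,
     (* A = A_1(x) + A_0(x) + A_{1/2}(x) (directness is automatic) *)
     (forall u, exists u1 u0 uh, u = u1 + u0 + uh /\
        [/\ eigsp x 1 u1, eigsp x 0 u0 & eigsp x half uh]),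
     (forall u, eigsp x 1 u -> exists k : F, u = k *: x) &
     ([/\ forall u v, eigsp x 1 u -> eigsp x 1 v -> eigsp x 1 (mul u v),
         forall u v, eigsp x 1 u -> eigsp x 0 v -> mul u v = 0,
         forall u v, eigsp x 0 u -> eigsp x 0 v -> eigsp x 0 (mul u v),
         forall u v, eigsp x 1 u -> eigsp x half v -> eigsp x half (mul u v) &
         forall u v, eigsp x 0 u -> eigsp x half v -> eigsp x half (mul u v)] /\
         forall u v, eigsp x half u -> eigsp x half v ->
           exists w1 w0, mul u v = w1 + w0 /\ eigsp x 1 w1 /\ eigsp x 0 w0)].

Definition gen (S : V -> Prop) (u : V) : Prop :=
  forall P : V -> Prop,
    (forall x, S x -> P x) -> P 0 ->
    (forall x y, P x -> P y -> P (x + y)) ->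
    (forall (k : F) x, P x -> P (k *: x)) ->
    (forall x y, P x -> P y -> P (mul x y)) -> P u.

Definition jordan_half_algebra : Prop :=
  comm_algebra /\ forall u, gen primitive_axis u.

Definition frobenius (form : V -> V -> F) : Prop :=
  [/\ (forall (k : F) u v w, form (k *: u + v) w = k * form u w + form v w),
      (forall (k : F) u v w, form u (k *: v + w) = k * form u v + form u w),
      (forall u v w, form (mul u v) w = form u (mul v w)) &
      (forall x, primitive_axis x -> form x x = 1)].

Definition gen2 (a b : V) : V -> Prop := gen (fun x => x = a \/ x = b).

Definition is_identity_of (J : V -> Prop) (e : V) : Prop :=
  J e /\ forall u, J u -> mul e u = u.

Definition solid (J : V -> Prop) : Prop :=
  forall c, J c -> mul c c = c -> c <> 0 -> ~ is_identity_of J c ->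
    primitive_axis c.

End JordanHalf.

(* Write [b = phi a + b0 + bh] along the Peirce decomposition of [a], where
   [phi = (a, b)].  The fusion rules and the Frobenius form give the
   multiplication table of span {a, b0, bh}, which is therefore <<a, b>>.  For
   [phi] in {0, 1} its idempotents other than 0 and 1 are, up to swapping [a]
   and [b], the points [c t = a + t bh + phi t^2 b0] of a curve through [a].
   The Miyamoto involutions of [a] and [b] act on the curve by [t |-> -t] and
   [t |-> 4 phi - 2 - t], so [c t] is an axis for [t] in (4 phi - 2) N.  Being an
   axis amounts to polynomial identities in [t] (the Frobenius form turns
   [A_1 = F c] into one), so in characteristic 0 every [c t] is an axis. *)

From Pilot Require Import Defs.
From HB Require Import structures.
From mathcomp Require Import all_boot all_order all_algebra.
From mathcomp Require Import ring ssrAC.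
Set Implicit Arguments. Unset Strict Implicit. Unset Printing Implicit Defensive.
Import GRing.Theory.
Local Open Scope ring_scope.

(** * Formal linear combinations *)

Section LinearCombination.
Variables (F : fieldType) (V : lmodType F).

(* Identities between combinations of three atoms reduce to [ring] on the
   coefficients. *)
Definition lc3 (E : V * V * V) (p q r : F) : V := p *: E.1.1 + q *: E.1.2 + r *: E.2.

Lemma lc3D E p q r p' q' r' :
  lc3 E p q r + lc3 E p' q' r' = lc3 E (p + p') (q + q') (r + r').
Proof. by rewrite /lc3 !scalerDl addrACA [X in X + _ = _]addrACA -!addrA. Qed.

Lemma lc3Z E k p q r : k *: lc3 E p q r = lc3 E (k * p) (k * q) (k * r).
Proof. by rewrite /lc3 !scalerDr !scalerA. Qed.

Lemma lc3N E p q r : - lc3 E p q r = lc3 E (- p) (- q) (- r).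
Proof. by rewrite -scaleN1r lc3Z !mulN1r. Qed.

Lemma lc3B E p q r p' q' r' :
  lc3 E p q r - lc3 E p' q' r' = lc3 E (p - p') (q - q') (r - r').
Proof. by rewrite lc3N lc3D. Qed.

Lemma lc30 E : lc3 E 0 0 0 = 0.
Proof. by rewrite /lc3 !scale0r !addr0. Qed.

Lemma lc3_100 (e1 e2 e3 : V) : lc3 (e1, e2, e3) 1 0 0 = e1.
Proof. by rewrite /lc3 /= scale1r !scale0r !addr0. Qed.

Lemma lc3_010 (e1 e2 e3 : V) : lc3 (e1, e2, e3) 0 1 0 = e2.
Proof. by rewrite /lc3 /= scale1r !scale0r add0r addr0. Qed.

Lemma lc3_001 (e1 e2 e3 : V) : lc3 (e1, e2, e3) 0 0 1 = e3.
Proof. by rewrite /lc3 /= scale1r !scale0r !add0r. Qed.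

Lemma lc3_atom1 E : E.1.1 = lc3 E 1 0 0. Proof. by case: E => [[]] *; rewrite lc3_100. Qed.
Lemma lc3_atom2 E : E.1.2 = lc3 E 0 1 0. Proof. by case: E => [[]] *; rewrite lc3_010. Qed.
Lemma lc3_atom3 E : E.2 = lc3 E 0 0 1. Proof. by case: E => [[]] *; rewrite lc3_001. Qed.

Lemma lc3_eq E p q r p' q' r' :
  p = p' -> q = q' -> r = r' -> lc3 E p q r = lc3 E p' q' r'.
Proof. by move=> -> -> ->. Qed.

Lemma lc3_eq_mod E (t p q r p' q' r' m1 m2 m3 m1' m2' m3' : F) :
    lc3 E m1 m2 m3 = lc3 E m1' m2' m3' ->
    p - p' = t * (m1 - m1') -> q - q' = t * (m2 - m2') -> r - r' = t * (m3 - m3') ->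
  lc3 E p q r = lc3 E p' q' r'.
Proof.
move=> hm e1 e2 e3; apply/eqP; rewrite -subr_eq0 lc3B e1 e2 e3 -lc3Z -lc3B hm.
by rewrite subrr scaler0.
Qed.

Lemma scale_idem_coef (k : F) (e : V) : e <> 0 -> (k * k) *: e = k *: e -> k = 0 \/ k = 1.
Proof.
move=> ne /eqP; rewrite -subr_eq0 -scalerBl scaler_eq0 => /orP [|/eqP //].
have -> : k * k - k = k * (k - 1) by rewrite mulrBr mulr1.
by rewrite mulf_eq0 subr_eq0 => /orP [/eqP->|/eqP->]; [left|right].
Qed.

End LinearCombination.

Ltac lc3_norm := rewrite ?(lc3D, lc3Z, lc3N, lc3B).

(* Turns [a], [b], [c] into [lc3 E _ _ _] atoms; naming them through the local
   definition [E] is what makes the repeated rewriting terminate. *)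
Ltac lc3_of a b c := let E := fresh "E" in pose E := (a, b, c);
  rewrite -[a]/(E.1.1) -[b]/(E.1.2) -[c]/(E.2) ?(lc3_atom1 E) ?(lc3_atom2 E)
    ?(lc3_atom3 E) ?scaler0 ?addr0 ?add0r; lc3_norm.

Ltac lc3_of2 a b := let E := fresh "E" in pose E := (a, b, a);
  rewrite -[a]/(E.1.1) -[b]/(E.1.2) ?(lc3_atom1 E) ?(lc3_atom2 E) ?scaler0 ?addr0 ?add0r;
  lc3_norm.

(** * Polynomial maps *)

Section PolynomialMaps.
Variable F : fieldType.

(* Horner form with coefficients in [W], which need not be finite-dimensional. *)
Fixpoint polymap_le (W : lmodType F) (n : nat) (f : F -> W) : Prop :=
  if n is n'.+1 then exists v g, polymap_le n' g /\ forall x, f x = v + x *: g x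
  else exists v, forall x, f x = v.

Definition polymap (W : lmodType F) (f : F -> W) := exists n, polymap_le n f.

Section OneSpace.
Variable W : lmodType F.
Implicit Types (f g : F -> W) (v : W).

Lemma polymap_le_ext n f g : f =1 g -> polymap_le n f -> polymap_le n g.
Proof.
case: n => [|n] e; first by case=> v hv; exists v => x; rewrite -e.
by case=> v [h [hh hv]]; exists v, h; split=> // x; rewrite -e.
Qed.

Lemma polymap_le_cst n v : polymap_le n (fun=> v).
Proof.
elim: n v => [|n IH] v; first by exists v.
by exists v, (fun=> 0); split=> // x; rewrite scaler0 addr0.
Qed.

Lemma polymap_le_S n f : polymap_le n f -> polymap_le n.+1 f.
Proof.
elim: n f => [|n IH] f.
  case=> v hv; exists v, (fun=> 0); split; first exact: polymap_le_cst.
  by move=> x; rewrite scaler0 addr0.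
by case=> v [g [hg hf]]; exists v, g; split=> //; apply: IH.
Qed.

Lemma polymap_le_leq n m f : (n <= m)%N -> polymap_le n f -> polymap_le m f.
Proof.
move/subnKC <-; elim: (m - n)%N => [|k IH]; first by rewrite addn0.
by move/IH; rewrite addnS; apply: polymap_le_S.
Qed.

Lemma polymap_le_add n f g :
  polymap_le n f -> polymap_le n g -> polymap_le n (fun x => f x + g x).
Proof.
elim: n f g => [|n IH] f g.
  by case=> v hv [w hw]; exists (v + w) => x; rewrite hv hw.
case=> v [f' [hf' ef]] [w [g' [hg' eg]]].
exists (v + w), (fun x => f' x + g' x); split; first exact: IH.
by move=> x; rewrite ef eg scalerDr addrACA.
Qed.

Lemma polymap_le_lin (W2 : lmodType F) (T : W -> W2) n f :
  linear T -> polymap_le n f -> polymap_le n (fun x => T (f x)).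
Proof.
move=> hT; elim: n f => [|n IH] f; first by case=> v hv; exists (T v) => x; rewrite hv.
case=> v [g [hg ef]]; exists (T v), (fun x => T (g x)); split; first exact: IH.
by move=> x; rewrite ef addrC hT addrC.
Qed.

Lemma polymap_le_factor n f r : polymap_le n.+1 f ->
  exists2 h, polymap_le n h & forall x, f x - f r = (x - r) *: h x.
Proof.
elim: n f => [|n IH] f.
  case=> v [g [[w hw] ef]]; exists (fun=> w); first by exists w.
  by move=> x; rewrite !ef !hw opprD addrACA subrr add0r -scalerBl.
case=> v [g [hg ef]]; have [h hh eh] := IH _ hg.
exists (fun x => g x + r *: h x).
  apply: polymap_le_add; first exact: hg.
  by apply: polymap_le_S; apply: polymap_le_lin hh => k u w; rewrite scalerDr !scalerA mulrC.
move=> x; have egr : g r = g x - (x - r) *: h x by rewrite -eh opprB addrC subrK.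
rewrite !ef egr; lc3_of v (g x) (h x).
by apply: lc3_eq; ring.
Qed.

Lemma polymap_le_comp_scale n f s : polymap_le n f -> polymap_le n (fun t => f (s * t)).
Proof.
elim: n f => [|n IH] f; first by case=> v hv; exists v => x; rewrite hv.
case=> v [g [hg ef]]; exists v, (fun t => s *: g (s * t)); split.
  by apply: polymap_le_lin (IH _ hg) => k u w; rewrite scalerDr !scalerA mulrC.
by move=> t; rewrite ef scalerA [t * s]mulrC.
Qed.

Hypothesis char0 : [pchar F] =i pred0.

(* Peel off one root at a time with the factor theorem; characteristic 0 keeps
   the integer roots distinct. *)
Lemma polymap_le_eq0 n f m :
  polymap_le n f -> (forall k, (m <= k)%N -> f k%:R = 0) -> f =1 fun=> 0.
Proof.
elim: n f m => [|n IH] f m; first by case=> v hv hz x; rewrite hv -(hv m%:R) hz.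
move=> hf hz; have [h hh eh] := polymap_le_factor m%:R hf.
have fm0 : f m%:R = 0 by apply: hz.
suff h0 : h =1 fun=> 0 by move=> x; have := eh x; rewrite fm0 subr0 h0 scaler0.
apply: (IH _ m.+1 hh) => k ltmk; have := eh k%:R.
rewrite hz ?(ltnW ltmk) // fm0 subrr => /esym/eqP; rewrite scaler_eq0.
rewrite -natrB ?(ltnW ltmk) //; move/pcharf0P: char0 => ->.
by rewrite subn_eq0 leqNgt ltmk => /eqP.
Qed.

Lemma polymap_cst v : polymap (fun=> v).
Proof. by exists 0%N, v. Qed.

Lemma polymap_ext f g : f =1 g -> polymap f -> polymap g.
Proof. by move=> e [n h]; exists n; apply: polymap_le_ext h. Qed.

Lemma polymap_add f g : polymap f -> polymap g -> polymap (fun x => f x + g x).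
Proof.
move=> [n hf] [m hg]; exists (maxn n m).
by apply: polymap_le_add; apply: polymap_le_leq (hf) || apply: polymap_le_leq (hg);
  rewrite ?leq_maxl ?leq_maxr.
Qed.

Lemma polymap_X f : polymap f -> polymap (fun x => x *: f x).
Proof. by move=> [n h]; exists n.+1, 0, f; split=> // x; rewrite add0r. Qed.

Lemma polymap_lin (W2 : lmodType F) (T : W -> W2) f :
  linear T -> polymap f -> polymap (fun x => T (f x)).
Proof. by move=> hT [n h]; exists n; apply: polymap_le_lin. Qed.

Lemma polymap_scale k f : polymap f -> polymap (fun x => k *: f x).
Proof. by apply: polymap_lin => a u v; rewrite scalerDr !scalerA mulrC. Qed.

Lemma polymap_sub f g : polymap f -> polymap g -> polymap (fun x => f x - g x).
Proof.
move=> hf hg; apply: polymap_add => //.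
by apply: polymap_lin hg => a u v; rewrite opprD scalerN.
Qed.

Lemma polymap_eq0 f s : polymap f -> s != 0 ->
  (forall k, f (s * k%:R) = 0) -> f =1 fun=> 0.
Proof.
move=> [n h] s0 hz x.
have := polymap_le_eq0 (polymap_le_comp_scale s h) (m := 0%N) (fun k _ => hz k) (x / s).
by rewrite mulrC divfK.
Qed.

End OneSpace.
End PolynomialMaps.

Lemma polymap_bilin (F : fieldType) (W1 W2 W3 : lmodType F) (B : W1 -> W2 -> W3)
    (f : F -> W1) (g : F -> W2) :
  (forall w, linear (B^~ w)) -> (forall u, linear (B u)) ->
  polymap f -> polymap g -> polymap (fun x => B (f x) (g x)).
Proof.
move=> linBl linBr [n hf] hg; elim: n f hf => [|n IH] f.
  by case=> v hv; apply: polymap_ext (polymap_lin (linBr v) hg) => x; rewrite hv.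
case=> v [f' [hf' ef]]; apply: (@polymap_ext _ _ (fun x => B v (g x) + x *: B (f' x) (g x))).
  by move=> x; rewrite ef [v + _]addrC linBl addrC.
by apply: polymap_add; [apply: polymap_lin | apply/polymap_X/IH].
Qed.

Lemma two_neq0 (F : fieldType) : [pchar F] =i pred0 -> 2%:R != 0 :> F.
Proof. by move/pcharf0P => ->. Qed.

Ltac half_field := rewrite /Defs.half; field; try (apply: two_neq0; assumption).

(** * Peirce decomposition and Miyamoto involutions *)

Section CommutativeAlgebra.
Variables (F : fieldType) (V : lmodType F) (mul : V -> V -> V).
Hypothesis char0 : [pchar F] =i pred0.
Hypothesis commA : comm_algebra mul.

Local Notation "u ** v" := (mul u v) (at level 40, left associativity).
Local Notation half := (Defs.half F).
Local Notation eigsp := (eigsp mul).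
Local Notation primitive_axis := (primitive_axis mul).

Lemma prodC u v : u ** v = v ** u. Proof. by case: commA. Qed.

Lemma prod_linl w : linear (mul^~ w). Proof. by case: commA => _ h k u v; apply: h. Qed.

Lemma prod_linr u : linear (mul u).
Proof. by move=> k v w; rewrite !(prodC u) prod_linl. Qed.

Let prodL w : {linear V -> V} :=
  HB.pack (mul^~ w) (GRing.isLinear.Build _ _ _ _ _ (prod_linl w)).
Let prodR u : {linear V -> V} :=
  HB.pack (mul u) (GRing.isLinear.Build _ _ _ _ _ (prod_linr u)).

Lemma prodDl w u v : (u + v) ** w = u ** w + v ** w. Proof. exact: (linearD (prodL w) u v). Qed.
Lemma prodNl w u : (- u) ** w = - (u ** w). Proof. exact: (linearN (prodL w) u). Qed.
Lemma prodZl w k u : (k *: u) ** w = k *: (u ** w). Proof. exact: (linearZ_LR (prodL w) k u). Qed.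
Lemma prod0r u : u ** 0 = 0. Proof. exact: linear0 (prodR u). Qed.
Lemma prodDr u v w : u ** (v + w) = u ** v + u ** w. Proof. exact: (linearD (prodR u) v w). Qed.
Lemma prodNr u v : u ** (- v) = - (u ** v). Proof. exact: (linearN (prodR u) v). Qed.
Lemma prodZr u k v : u ** (k *: v) = k *: (u ** v). Proof. exact: (linearZ_LR (prodR u) k v). Qed.

(* [x] acts by 1, 0 and 1/2 on its three eigenspaces; interpolating these values
   gives the projections onto them as polynomials in multiplication by [x]. *)
Definition peirce1 x u := 2%:R *: (x ** (x ** u)) - x ** u.
Definition peirceh x u := 4%:R *: (x ** u - x ** (x ** u)).
Definition peirce0 x u := u - peirce1 x u - peirceh x u.

Lemma peirce_sum x u : u = peirce1 x u + peirce0 x u + peirceh x u.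
Proof. by rewrite /peirce0 addrA subrK addrC subrK. Qed.

Lemma linear_peirce1 x : linear (peirce1 x).
Proof. exact: (linearP (2%:R \*: (prodR x \o prodR x) \- prodR x)). Qed.
Lemma linear_peirceh x : linear (peirceh x).
Proof. exact: (linearP (4%:R \*: (prodR x \- (prodR x \o prodR x)))). Qed.

Lemma linear_peirce0 x : linear (peirce0 x).
Proof.
exact: (linearP (idfun \- (2%:R \*: (prodR x \o prodR x) \- prodR x)
                       \- (4%:R \*: (prodR x \- (prodR x \o prodR x))))).
Qed.

Let peirce1L x : {linear V -> V} :=
  HB.pack (peirce1 x) (GRing.isLinear.Build _ _ _ _ _ (linear_peirce1 x)).
Let peirce0L x : {linear V -> V} :=
  HB.pack (peirce0 x) (GRing.isLinear.Build _ _ _ _ _ (linear_peirce0 x)).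
Let peircehL x : {linear V -> V} :=
  HB.pack (peirceh x) (GRing.isLinear.Build _ _ _ _ _ (linear_peirceh x)).

Lemma peirce1D x u v : peirce1 x (u + v) = peirce1 x u + peirce1 x v.
Proof. exact: (linearD (peirce1L x) u v). Qed.
Lemma peirce0D x u v : peirce0 x (u + v) = peirce0 x u + peirce0 x v.
Proof. exact: (linearD (peirce0L x) u v). Qed.
Lemma peircehD x u v : peirceh x (u + v) = peirceh x u + peirceh x v.
Proof. exact: (linearD (peircehL x) u v). Qed.
Lemma peirce0Z x k u : peirce0 x (k *: u) = k *: peirce0 x u.
Proof. exact: (linearZ_LR (peirce0L x) k u). Qed.
Lemma peircehB x u v : peirceh x (u - v) = peirceh x u - peirceh x v.
Proof. exact: (linearB (peircehL x) u v). Qed.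
Lemma peircehZ x k u : peirceh x (k *: u) = k *: peirceh x u.
Proof. exact: (linearZ_LR (peircehL x) k u). Qed.

Lemma prod_lc3l E p q r w :
  lc3 E p q r ** w = lc3 (E.1.1 ** w, E.1.2 ** w, E.2 ** w) p q r.
Proof. by rewrite /lc3 !prodDl !prodZl. Qed.

Lemma prod_lc3r E p q r w :
  w ** lc3 E p q r = lc3 (w ** E.1.1, w ** E.1.2, w ** E.2) p q r.
Proof. by rewrite /lc3 !prodDr !prodZr. Qed.

Lemma prod_lc3_eig x e1 e0 eh p q r :
    eigsp x 1 e1 -> eigsp x 0 e0 -> eigsp x half eh ->
  x ** lc3 (e1, e0, eh) p q r = lc3 (e1, e0, eh) p 0 (r * half).
Proof.
rewrite /Defs.eigsp => h1 h0 hh.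
by rewrite /lc3 /= !prodDr !prodZr h1 h0 hh scale1r !scalerA scale0r mulr0 scale0r.
Qed.

Lemma peirce_lc3 x e1 e0 eh p q r :
    eigsp x 1 e1 -> eigsp x 0 e0 -> eigsp x half eh ->
  [/\ peirce1 x (lc3 (e1, e0, eh) p q r) = lc3 (e1, e0, eh) p 0 0,
      peirce0 x (lc3 (e1, e0, eh) p q r) = lc3 (e1, e0, eh) 0 q 0 &
      peirceh x (lc3 (e1, e0, eh) p q r) = lc3 (e1, e0, eh) 0 0 r].
Proof.
move=> h1 h0 hh; rewrite /peirce0 /peirce1 /peirceh !prod_lc3_eig //.
by lc3_norm; split; apply: lc3_eq; half_field.
Qed.

Lemma eigsp0 x lam : eigsp x lam 0.
Proof. by rewrite /Defs.eigsp prod0r scaler0. Qed.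

Lemma peirce_eig1 x e : eigsp x 1 e -> [/\ peirce1 x e = e, peirce0 x e = 0 & peirceh x e = 0].
Proof.
by move=> h; have := peirce_lc3 1 0 0 h (eigsp0 x 0) (eigsp0 x half); rewrite lc3_100 !lc30.
Qed.

Lemma peirce_eig0 x e : eigsp x 0 e -> [/\ peirce1 x e = 0, peirce0 x e = e & peirceh x e = 0].
Proof.
by move=> h; have := peirce_lc3 0 1 0 (eigsp0 x 1) h (eigsp0 x half); rewrite lc3_010 !lc30.
Qed.

Lemma peirce_eigh x e : eigsp x half e -> [/\ peirce1 x e = 0, peirce0 x e = 0 & peirceh x e = e].
Proof.
by move=> h; have := peirce_lc3 0 0 1 (eigsp0 x 1) (eigsp0 x 0) h; rewrite lc3_001 !lc30.
Qed.

Lemma lc3_eig_inj x e1 e0 eh p q r p' q' r' :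
    eigsp x 1 e1 -> eigsp x 0 e0 -> eigsp x half eh ->
    lc3 (e1, e0, eh) p q r = lc3 (e1, e0, eh) p' q' r' ->
  [/\ p *: e1 = p' *: e1, q *: e0 = q' *: e0 & r *: eh = r' *: eh].
Proof.
move=> h1 h0 hh e; have [] := peirce_lc3 p q r h1 h0 hh.
rewrite e; have [-> -> ->] := peirce_lc3 p' q' r' h1 h0 hh.
by rewrite /lc3 /= !scale0r !addr0 !add0r => -> -> ->.
Qed.

Lemma axis_neq0 x : primitive_axis x -> x <> 0. Proof. by case. Qed.

Lemma axis_eig1 x : primitive_axis x -> eigsp x 1 x.
Proof. by case=> _ idem _ _ _; rewrite /Defs.eigsp idem scale1r. Qed.

Lemma axis_peirce x u : primitive_axis x ->
  [/\ eigsp x 1 (peirce1 x u), eigsp x 0 (peirce0 x u) & eigsp x half (peirceh x u)].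
Proof.
case=> _ _ decomp _ _; have [u1 [u0 [uh [-> [h1 h0 hh]]]]] := decomp u.
have -> : u1 + u0 + uh = lc3 (u1, u0, uh) 1 1 1 by rewrite /lc3 !scale1r.
by have [-> -> ->] := peirce_lc3 1 1 1 h1 h0 hh; rewrite lc3_100 lc3_010 lc3_001.
Qed.

Lemma peirce_prod x u v : primitive_axis x ->
  [/\ peirce1 x (u ** v) = peirce1 x u ** peirce1 x v + peirce1 x (peirceh x u ** peirceh x v),
      peirce0 x (u ** v) = peirce0 x u ** peirce0 x v + peirce0 x (peirceh x u ** peirceh x v) &
      peirceh x (u ** v) = (u - peirceh x u) ** peirceh x v + peirceh x u ** (v - peirceh x v)].
Proof.
move=> ax; have [_ _ _ _ [[f11 f10 f00 f1h f0h] fhh]] := ax.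
have [u1E u0E uhE] := axis_peirce u ax; have [v1E v0E vhE] := axis_peirce v ax.
have [w1 [w0 [ew [w1E w0E]]]] := fhh _ _ uhE vhE.
have eu := peirce_sum x u; have ev := peirce_sum x v.
set u1 := peirce1 x u in eu u1E *; set u0 := peirce0 x u in eu u0E *.
set uh := peirceh x u in eu uhE ew *; set v1 := peirce1 x v in ev v1E *.
set v0 := peirce0 x v in ev v0E *; set vh := peirceh x v in ev vhE ew *.
clearbody u1 u0 uh v1 v0 vh.
rewrite ew eu ev !addrK !prodDl !prodDr (f10 _ _ u1E v0E) (prodC u0) (f10 _ _ v1E u0E) ew.
rewrite [uh ** v1]prodC [uh ** v0]prodC !(peirce1D, peirce0D, peircehD).
have [-> -> ->] := peirce_eig0 (eigsp0 x 0).
have [-> -> ->] := peirce_eig1 (f11 _ _ u1E v1E).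
have [-> -> ->] := peirce_eigh (f1h _ _ u1E vhE).
have [-> -> ->] := peirce_eig0 (f00 _ _ u0E v0E).
have [-> -> ->] := peirce_eigh (f0h _ _ u0E vhE).
have [-> -> ->] := peirce_eigh (f1h _ _ v1E uhE).
have [-> -> ->] := peirce_eigh (f0h _ _ v0E uhE).
have [-> -> ->] := peirce_eig1 w1E.
have [-> -> ->] := peirce_eig0 w0E.
by rewrite !(addr0, add0r).
Qed.

Definition miyamoto x u := u - 2%:R *: peirceh x u.

Lemma linear_miyamoto x : linear (miyamoto x).
Proof. exact: (linearP (idfun \- 2%:R \*: peircehL x)). Qed.

Lemma peirceh_idem x u : primitive_axis x -> peirceh x (peirceh x u) = peirceh x u.
Proof. by move=> ax; have [_ _ hh] := axis_peirce u ax; have [_ _ ->] := peirce_eigh hh. Qed.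

Lemma miyamotoK x : primitive_axis x -> involutive (miyamoto x).
Proof.
move=> ax u; rewrite /miyamoto peircehB peircehZ.
rewrite peirceh_idem //; lc3_of2 u (peirceh x u).
by apply: lc3_eq; ring.
Qed.

Lemma miyamoto_prod x u v : primitive_axis x ->
  miyamoto x (u ** v) = miyamoto x u ** miyamoto x v.
Proof.
move=> ax; rewrite /miyamoto; have [_ _ ->] := peirce_prod u v ax.
move: (peirceh x u) (peirceh x v) => uh vh.
have [u' ->] : exists u', u = u' + uh by exists (u - uh); rewrite subrK.
have [v' ->] : exists v', v = v' + vh by exists (v - vh); rewrite subrK.
have sym (w w' : V) : w + w' - 2%:R *: w' = w - w'.
  by lc3_of2 w w'; apply: lc3_eq; ring.
rewrite !addrK !sym !prodDl !prodDr !prodNl !prodNr opprK.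
rewrite [X in X - _ = _](AC (2*2) ((1*4)*(2*3))) [RHS](AC (2*2) ((1*4)*(2*3))) /= -opprD.
move: (u' ** v' + uh ** vh) (u' ** vh + uh ** v') => S T.
by lc3_of2 S T; apply: lc3_eq; ring.
Qed.

Lemma axis_aut (g : V -> V) y : bijective g -> linear g ->
  {morph g : u v / u ** v} -> primitive_axis y -> primitive_axis (g y).
Proof.
move=> [h gK hK] glin gM [nz idem decomp one [[f11 f10 f00 f1h f0h] fhh]].
pose gL : {linear V -> V} := HB.pack g (GRing.isLinear.Build _ _ _ _ _ glin).
have gD u v : g (u + v) = g u + g v by exact: (linearD gL u v).
have gZ k u : g (k *: u) = k *: g u by exact: (linearZ_LR gL k u).
have g0 : g 0 = 0 by exact: (linear0 gL).
have fwd lam u : eigsp y lam u -> eigsp (g y) lam (g u).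
  by rewrite /Defs.eigsp => e; rewrite -gM e gZ.
have bwd lam u : eigsp (g y) lam u -> eigsp y lam (h u).
  by move=> e; apply: (can_inj gK); rewrite /Defs.eigsp gM hK e gZ hK.
split.
- by move=> y0; apply: nz; apply: (can_inj gK); rewrite y0 g0.
- by rewrite -gM idem.
- move=> u; have [u1 [u0 [uh [eu [h1 h0 hh]]]]] := decomp (h u).
  exists (g u1), (g u0), (g uh); split; first by rewrite -!gD -eu hK.
  by split; apply: fwd.
- by move=> u /bwd /one [k ek]; exists k; rewrite -(hK u) ek gZ.
split; first split.
- by move=> u v /bwd hu /bwd hv; have := fwd _ _ (f11 _ _ hu hv); rewrite gM !hK.
- by move=> u v /bwd hu /bwd hv; rewrite -(hK u) -(hK v) -gM (f10 _ _ hu hv) g0.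
- by move=> u v /bwd hu /bwd hv; have := fwd _ _ (f00 _ _ hu hv); rewrite gM !hK.
- by move=> u v /bwd hu /bwd hv; have := fwd _ _ (f1h _ _ hu hv); rewrite gM !hK.
- by move=> u v /bwd hu /bwd hv; have := fwd _ _ (f0h _ _ hu hv); rewrite gM !hK.
move=> u v /bwd hu /bwd hv; have [w1 [w0 [e [e1 e0]]]] := fhh _ _ hu hv.
exists (g w1), (g w0); split; last by split; apply: fwd.
by rewrite -gD -e gM !hK.
Qed.

Lemma miyamoto_axis x y : primitive_axis x -> primitive_axis y ->
  primitive_axis (miyamoto x y).
Proof.
move=> ax; apply: axis_aut; [exact: inv_bij (miyamotoK ax) | exact: linear_miyamoto |].
by move=> u v; apply: miyamoto_prod.
Qed.

Lemma one_neq_half : 1 != half.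
Proof.
apply/eqP => h; have : (2%:R : F) * half = 1 by rewrite /Defs.half mulfV ?two_neq0.
rewrite -h mulr1 => /eqP; rewrite -subr_eq0 (_ : 2%:R - 1 = 1 :> F) ?oner_eq0 //.
by rewrite -addrA subrr addr0.
Qed.

Section FrobeniusForm.
Variable form : V -> V -> F.
Hypothesis frob : frobenius mul form.

Lemma formA u v w : form (u ** v) w = form u (v ** w). Proof. by case: frob. Qed.

Lemma form_axis x : primitive_axis x -> form x x = 1. Proof. by case: frob => _ _ _; apply. Qed.

Lemma form_linl w : scalar (form^~ w). Proof. by case: frob => h _ _ _ k u v; apply: h. Qed.
Lemma form_linr u : scalar (form u). Proof. by case: frob => _ h _ _ k v w; apply: h. Qed.

Let formL w : {scalar V} :=
  HB.pack (form^~ w) (GRing.isLinear.Build _ _ _ _ _ (form_linl w)).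
Let formR u : {scalar V} :=
  HB.pack (form u) (GRing.isLinear.Build _ _ _ _ _ (form_linr u)).

Lemma formDl w u v : form (u + v) w = form u w + form v w.
Proof. exact: (linearD (formL w) u v). Qed.
Lemma formZl w k u : form (k *: u) w = k * form u w. Proof. exact: (linearZ_LR (formL w) k u). Qed.
Lemma form0r u : form u 0 = 0. Proof. exact: (linear0 (formR u)). Qed.
Lemma formDr u v w : form u (v + w) = form u v + form u w.
Proof. exact: (linearD (formR u) v w). Qed.
Lemma formZr u k v : form u (k *: v) = k * form u v. Proof. exact: (linearZ_LR (formR u) k v). Qed.

Lemma form_lc3l E p q r w :
  form (lc3 E p q r) w = p * form E.1.1 w + q * form E.1.2 w + r * form E.2 w.
Proof. by rewrite /lc3 !formDl !formZl. Qed.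

Lemma form_lc3r E p q r w :
  form w (lc3 E p q r) = p * form w E.1.1 + q * form w E.1.2 + r * form w E.2.
Proof. by rewrite /lc3 !formDr !formZr. Qed.

Lemma form_eig x lam e : primitive_axis x -> eigsp x lam e -> 1 != lam ->
  form x e = 0 /\ form e x = 0.
Proof.
move=> ax he lam1; have idem : x ** x = x by case: ax.
suff fixed0 (k : F) : k = lam * k -> k = 0.
  split; apply: fixed0; first by rewrite -{1}idem formA he formZr.
  by rewrite -{1}idem -formA prodC he formZl.
move/eqP; rewrite -{1}[k]mul1r -subr_eq0 -mulrBl mulf_eq0 subr_eq0 (negbTE lam1).
by move/eqP.
Qed.

Lemma axis_lc3 x u : primitive_axis x ->
  u = lc3 (x, peirce0 x u, peirceh x u) (form x u) 1 1.
Proof.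
move=> ax; have [e1 e0 eh] := axis_peirce u ax.
have [_ _ _ one _] := ax; have [k ek] := one _ e1.
have k_form : k = form x u.
  have := peirce_sum x u; rewrite ek.
  move: (peirce0 x u) (peirceh x u) e0 eh => u0 uh e0 eh ->.
  rewrite !formDr formZr form_axis // (form_eig ax e0 (oner_neq0 F)).1.
  by rewrite (form_eig ax eh one_neq_half).1 mulr1 !addr0.
by rewrite {1}(peirce_sum x u) ek -k_form /lc3 !scale1r.
Qed.

Lemma axis_peirce1 x u : primitive_axis x -> peirce1 x u = form x u *: x.
Proof.
move=> ax; have [e1 e0 eh] := axis_peirce u ax.
rewrite {1}(axis_lc3 u ax).
have [-> _ _] := peirce_lc3 (form x u) 1 1 (axis_eig1 ax) e0 eh.
by rewrite /lc3 /= !scale0r !addr0.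
Qed.

Lemma form_sym_axis x u : primitive_axis x -> form u x = form x u.
Proof.
move=> ax; have [_ e0 eh] := axis_peirce u ax.
have [f0 f0'] := form_eig ax e0 (oner_neq0 F); have [fh fh'] := form_eig ax eh one_neq_half.
by rewrite (axis_lc3 u ax) form_lc3l form_lc3r /= !form_axis // f0 f0' fh fh'.
Qed.

Lemma prod_axis_twice x u : primitive_axis x ->
  x ** (x ** u) = half *: (x ** u) + (half * form x u) *: x.
Proof.
move=> ax; have [_ e0 eh] := axis_peirce u ax.
rewrite {1 2}(axis_lc3 u ax).
move: (form x u) (peirce0 x u) (peirceh x u) e0 eh => k u0 uh e0 eh.
rewrite !(prod_lc3_eig _ _ _ (axis_eig1 ax) e0 eh).
have -> : (half * k) *: x = lc3 (x, u0, uh) (half * k) 0 0 by rewrite /lc3 /= !scale0r !addr0.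
by lc3_norm; apply: lc3_eq; half_field.
Qed.

(** * Axes as solutions of polynomial identities *)

Record axis_identities x : Prop := AxisIdentities {
  axis_idem : x ** x = x;
  axis_eig0 : forall u, x ** peirce0 x u = 0;
  axis_eigh : forall u, x ** peirceh x u = half *: peirceh x u;
  axis_peirce1E : forall u, peirce1 x u = form x u *: x;
  axis_fusion00 : forall u v, x ** (peirce0 x u ** peirce0 x v) = 0;
  axis_fusion0h : forall u v,
    x ** (peirce0 x u ** peirceh x v) = half *: (peirce0 x u ** peirceh x v);
  axis_fusionhh : forall u v, peirceh x (peirceh x u ** peirceh x v) = 0 }.

Lemma identities_of_axis x : primitive_axis x -> axis_identities x.
Proof.
move=> ax; have [_ idem _ _ [[_ _ f00 _ f0h] fhh]] := ax.
have eig u := axis_peirce u ax.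
split=> // [u|u|u|u v|u v|u v].
- by have [_ -> _] := eig u; rewrite scale0r.
- by have [_ _ ->] := eig u.
- exact: axis_peirce1.
- by have [_ u0 _] := eig u; have [_ v0 _] := eig v; rewrite (f00 _ _ u0 v0) scale0r.
- by have [_ u0 _] := eig u; have [_ _ vh] := eig v; apply: f0h.
have [_ _ uh] := eig u; have [_ _ vh] := eig v; have [w1 [w0 [-> [w1E w0E]]]] := fhh _ _ uh vh.
rewrite peircehD; have [_ _ ->] := peirce_eig1 w1E.
by have [_ _ ->] := peirce_eig0 w0E; rewrite addr0.
Qed.

Lemma axis_of_identities x : x <> 0 -> axis_identities x -> primitive_axis x.
Proof.
move=> nz [idem e0 eh p1 f00 f0h fhh].
have e1 u : eigsp x 1 (peirce1 x u) by rewrite /Defs.eigsp p1 prodZr idem scale1r.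
have one u : eigsp x 1 u -> u = form x u *: x.
  by move=> h; have [e _ _] := peirce_eig1 h; rewrite -{1}e p1.
have is0 u : eigsp x 0 u -> peirce0 x u = u by case/peirce_eig0.
have ish u : eigsp x half u -> peirceh x u = u by case/peirce_eigh.
split=> //.
- move=> u; exists (peirce1 x u), (peirce0 x u), (peirceh x u).
  split; first exact: peirce_sum.
  by split; [apply: e1 | rewrite /Defs.eigsp e0 scale0r | apply: eh].
- by move=> u /one ->; eexists.
split; first split.
- by move=> u v /one -> /one ->; rewrite /Defs.eigsp !(prodZl, prodZr) !idem scale1r.
- by move=> u v /one -> hv; rewrite prodZl hv scale0r scaler0.
- by move=> u v /is0 <- /is0 <-; rewrite /Defs.eigsp f00 scale0r.
- move=> u v /one -> hv.
  by rewrite /Defs.eigsp prodZl hv !prodZr hv !scalerA [form x u * _]mulrC.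
- by move=> u v /is0 <- /ish <-; exact: f0h.
move=> u v /ish <- /ish <-; exists (peirce1 x (peirceh x u ** peirceh x v)).
exists (peirce0 x (peirceh x u ** peirceh x v)).
rewrite {1}(peirce_sum x (_ ** _)) fhh addr0.
by split=> //; split; [apply: e1 | rewrite /Defs.eigsp e0 scale0r].
Qed.

Lemma polymap_prod (f g : F -> V) : polymap f -> polymap g -> polymap (fun t => f t ** g t).
Proof. exact: polymap_bilin prod_linl prod_linr. Qed.

Lemma polymap_form (f : F -> V) u : polymap f -> polymap (fun t => form (f t) u : F^o).
Proof. by apply: (polymap_lin (T := fun v => form v u : F^o)) => a v w; apply: form_linl. Qed.

Lemma polymap_scalev (k : F -> F^o) (f : F -> V) :
  polymap k -> polymap f -> polymap (fun t => k t *: f t).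
Proof.
apply: polymap_bilin => [w a b b'|a b w w']; first by rewrite scalerDl scalerA.
by rewrite scalerDr !scalerA mulrC.
Qed.

Ltac polymap_auto pc := rewrite /peirce0 /peirce1 /peirceh;
  repeat first [ exact: pc | apply: polymap_cst | apply: polymap_sub | apply: polymap_add
    | apply: polymap_scale | apply: polymap_prod | apply: polymap_scalev | apply: polymap_form ].

(* Each axis identity is a polynomial equation in the parameter [t] of [c t],
   and holds at the infinitely many points [s * k]. *)
Lemma axis_polymap_family (c : F -> V) s : polymap c -> s != 0 ->
  (forall k, primitive_axis (c (s * k%:R))) -> forall g, c g <> 0 -> primitive_axis (c g).
Proof.
move=> pc s0 ax; have ids k := identities_of_axis (ax k).
have ext (W : lmodType F) (f1 f2 : F -> W) : polymap f1 -> polymap f2 ->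
    (forall k, f1 (s * k%:R) = f2 (s * k%:R)) -> f1 =1 f2.
  move=> p1 p2 e x; apply/eqP; rewrite -subr_eq0; apply/eqP.
  by apply: (polymap_eq0 char0 (polymap_sub p1 p2) s0) => k; rewrite e subrr.
suff ids_all g : axis_identities (c g) by move=> g cg0; apply: axis_of_identities.
split=> [|u|u|u|u v|u v|u v]; move: g; apply: ext; try by polymap_auto pc.
all: by move=> k; case: (ids k) => *; auto.
Qed.

(** * The subalgebra generated by two axes *)

Section TwoAxes.
Variables a b : V.
Hypotheses (axa : primitive_axis a) (axb : primitive_axis b).

Local Notation phi := (form a b).
Local Notation b0 := (peirce0 a b).
Local Notation bh := (peirceh a b).
Local Notation lc := (lc3 (a, b0, bh)).

Lemma b0_eig : eigsp a 0 b0. Proof. by case: (axis_peirce b axa). Qed.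
Lemma bh_eig : eigsp a half bh. Proof. by case: (axis_peirce b axa). Qed.

Lemma lc_b : b = lc phi 1 1. Proof. exact: axis_lc3. Qed.

Lemma prod_a_b : a ** b = lc phi 0 half.
Proof. by rewrite {1}lc_b (prod_lc3_eig _ _ _ (axis_eig1 axa) b0_eig bh_eig) mul1r. Qed.

(* Compare the Peirce components (with respect to [a]) of [b b = b], and the
   [A_0(a)]-components of [b (b a) = (b a + phi b) / 2]. *)
Lemma peirce_table :
  [/\ b0 ** bh = ((1 - phi) * half) *: bh,
      bh ** bh = (phi - phi ^+ 2) *: a + phi *: b0 &
      b0 ** b0 = (1 - phi) *: b0].
Proof.
have idem_a : a ** a = a by case: axa.
have idem_b : b ** b = b by case: axb.
have P1b : peirce1 a b = phi *: a by apply: axis_peirce1.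
have [P1bb P0bb Phbb] := peirce_prod b b axa.
have [w1 [w0 [bh_sq [w1E w0E]]]] :
    exists w1 w0, bh ** bh = w1 + w0 /\ eigsp a 1 w1 /\ eigsp a 0 w0.
  by case: axa => _ _ _ _ [_]; apply; apply: bh_eig.
have [P1w1 P0w1 _] := peirce_eig1 w1E; have [P1w0 P0w0 _] := peirce_eig0 w0E.
have b0_bh : b0 ** bh = ((1 - phi) * half) *: bh.
  have evenb : b - bh = phi *: a + b0 by rewrite {1}(peirce_sum a b) P1b addrK.
  move: Phbb; rewrite idem_b evenb [bh ** _]prodC prodDl prodZl bh_eig.
  lc3_of2 (peirceh a b) (b0 ** bh) => h.
  by apply: (lc3_eq_mod (t := - half) h); half_field.
have ew1 : w1 = (phi - phi ^+ 2) *: a.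
  move: P1bb; rewrite idem_b P1b bh_sq peirce1D P1w1 P1w0 addr0 prodZl prodZr idem_a.
  by rewrite scalerA; lc3_of2 a w1 => h; apply: (lc3_eq_mod (t := -1) h); ring.
have ew0 : w0 = phi *: b0.
  have := prod_axis_twice a axb.
  rewrite -(form_sym_axis a axb) [b ** a]prodC prod_a_b => /(congr1 (peirce0 a)).
  have [_ ab0 abh] := peirce_lc3 phi 0 half (axis_eig1 axa) b0_eig bh_eig.
  have [_ -> _] := peirce_prod b (lc phi 0 half) axa; rewrite ab0 abh lc30 prod0r add0r.
  have -> : lc 0 0 half = half *: bh by rewrite /lc3 /= !scale0r !add0r.
  rewrite prodZr peirce0Z bh_sq peirce0D P0w1 P0w0 add0r.
  rewrite peirce0D !peirce0Z ab0 lc30 scaler0 add0r.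
  by lc3_of2 w0 (peirce0 a b) => h; apply: (lc3_eq_mod (t := 2%:R) h); half_field.
split=> //; first by rewrite bh_sq ew1 ew0.
move: P0bb; rewrite idem_b bh_sq peirce0D P0w1 P0w0 add0r ew0.
by lc3_of2 (peirce0 a b) (b0 ** b0) => h; apply: (lc3_eq_mod (t := -1) h); ring.
Qed.

Lemma prod_lc x y z x' y' z' : lc x y z ** lc x' y' z' =
  lc (x * x' + (phi - phi ^+ 2) * (z * z')) ((1 - phi) * (y * y') + phi * (z * z'))
     (half * (x * z' + z * x') + ((1 - phi) * half) * (y * z' + z * y')).
Proof.
have [e0 eh] := (b0_eig, bh_eig); have [t0h thh t00] := peirce_table.
have idem : a ** a = a by case: axa.
rewrite prod_lc3l /= !prod_lc3r /= idem e0 eh [b0 ** a]prodC e0 [bh ** a]prodC eh.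
rewrite [bh ** b0]prodC t0h thh t00 /lc3 /= ?scaler0 ?addr0 ?add0r.
by lc3_of a (peirce0 a b) (peirceh a b); apply: lc3_eq; half_field.
Qed.

Lemma gen2_lc c : gen2 mul a b c -> exists x y z, c = lc x y z.
Proof.
move=> hc; apply: (hc (fun u => exists x y z, u = lc x y z)); last 4 first.
- by exists 0, 0, 0; rewrite lc30.
- by move=> u v [x [y [z ->]]] [x' [y' [z' ->]]]; rewrite lc3D; do 3 eexists.
- by move=> k u [x [y [z ->]]]; rewrite lc3Z; do 3 eexists.
- by move=> u v [x [y [z ->]]] [x' [y' [z' ->]]]; rewrite prod_lc; do 3 eexists.
by move=> u [->|->]; [exists 1, 0, 0; rewrite lc3_100 | exists phi, 1, 1; apply: lc_b].
Qed.

Lemma gen2_a_b0 : gen2 mul a b (a + b0).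
Proof.
move=> P base P0 PD PZ PM.
have PB u v : P u -> P v -> P (u - v).
  by move=> pu pv; apply: PD => //; rewrite -scaleN1r; apply: PZ.
have Pa : P a by apply: base; left.
have Pb : P b by apply: base; right.
have Pab := PM _ _ Pa Pb; have Paab := PM _ _ Pa Pab.
rewrite /peirce0 /peirce1 /peirceh; apply: PD => //.
apply: (PB); last by apply: PZ; apply: (PB).
by apply: (PB) => //; apply: (PB) => //; apply: PZ.
Qed.

(* Up to swapping [a] and [b], the idempotents of <<a, b>> other than 0 and 1
   lie on this curve when [phi] is 0 or 1. *)
Definition axis_curve (g : F) : V := lc 1 (phi * g ^+ 2) g.

Lemma axis_curve_neq0 g : axis_curve g <> 0.
Proof.
move=> /(congr1 (form a)); rewrite form0r /axis_curve form_lc3r /= form_axis //.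
rewrite (form_eig axa b0_eig (oner_neq0 F)).1 (form_eig axa bh_eig one_neq_half).1.
by rewrite !mulr0 !addr0 mulr1 => /eqP; rewrite oner_eq0.
Qed.

Lemma polymap_axis_curve : polymap axis_curve.
Proof.
apply: (@polymap_ext _ _ (fun g => a + g *: (bh + g *: (phi *: b0)))).
  move=> g; rewrite /axis_curve /lc3 /=; lc3_of a (peirce0 a b) (peirceh a b).
  by apply: lc3_eq; ring.
apply: polymap_add; first exact: polymap_cst.
apply: polymap_X; apply: polymap_add; first exact: polymap_cst.
by apply: polymap_X; apply: polymap_cst.
Qed.

Lemma miyamoto_a_axis_curve g : miyamoto a (axis_curve g) = axis_curve (- g).
Proof.
rewrite /miyamoto /axis_curve.
have [_ _ ->] := peirce_lc3 1 (phi * g ^+ 2) g (axis_eig1 axa) b0_eig bh_eig.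
by lc3_norm; apply: lc3_eq; ring.
Qed.

Section ZeroOne.
Hypothesis phi01 : phi = 0 \/ phi = 1.

Lemma miyamoto_b_axis_curve g :
  miyamoto b (axis_curve g) = axis_curve (4%:R * phi - 2%:R - g).
Proof.
rewrite /miyamoto /peirceh {1 2 3}lc_b /axis_curve !prod_lc.
by lc3_norm; apply: lc3_eq; case: phi01 => ->; half_field.
Qed.

Lemma axis_curve_axis g : primitive_axis (axis_curve g).
Proof.
have d0 : 4%:R * phi - 2%:R != 0.
  case: phi01 => ->; rewrite ?mulr0 ?add0r ?oppr_eq0 ?two_neq0 // mulr1.
  by rewrite (_ : 4%:R = 2%:R + 2%:R) ?addrK ?two_neq0 // -natrD.
suff hk k : primitive_axis (axis_curve ((4%:R * phi - 2%:R) * k%:R)).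
  exact (axis_polymap_family polymap_axis_curve d0 hk (@axis_curve_neq0 g)).
elim: k => [|k IH]; first by rewrite mulr0 /axis_curve expr2 !mulr0 lc3_100.
have -> : (4%:R * phi - 2%:R) * k.+1%:R = 4%:R * phi - 2%:R - - ((4%:R * phi - 2%:R) * k%:R).
  by rewrite -addn1 natrD; ring.
rewrite -miyamoto_b_axis_curve -miyamoto_a_axis_curve.
by apply: miyamoto_axis => //; apply: miyamoto_axis.
Qed.

Lemma lc_idem_coef x y z : lc x y z ** lc x y z = lc x y z ->
  [/\ x = 0 \/ x = 1, ((1 - phi) * y ^+ 2 + phi * z ^+ 2) *: b0 = y *: b0
    & ((x + (1 - phi) * y) * z) *: bh = z *: bh].
Proof.
rewrite prod_lc => idem.
have [cx cy cz] := lc3_eig_inj (axis_eig1 axa) b0_eig bh_eig idem.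
have phi2 : phi ^+ 2 = phi by case: phi01 => ->; rewrite ?expr0n ?expr1n.
rewrite phi2 subrr mul0r addr0 in cx; split; first exact: scale_idem_coef (axis_neq0 axa) cx.
  by rewrite -cy !expr2.
by rewrite -cz; congr (_ *: _); half_field.
Qed.

End ZeroOne.

Lemma lc_idem_phi1 x y z : phi = 1 -> lc x y z ** lc x y z = lc x y z -> lc x y z <> 0 ->
  lc x y z = axis_curve z.
Proof.
move=> phi1 /(lc_idem_coef (or_intror phi1)) [x01 cy cz] nz.
rewrite phi1 subrr mul0r add0r mul1r in cy; rewrite phi1 subrr mul0r addr0 in cz.
case: x01 => x01; subst x; last first.
  by rewrite /axis_curve /lc3 -cy phi1 mul1r.
have zbh0 : z *: bh = 0 by rewrite -cz mul0r scale0r.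
have [_ bh_sq _] := peirce_table; rewrite phi1 expr1n subrr scale0r add0r scale1r in bh_sq.
exfalso; apply: nz; rewrite /lc3 /= zbh0 scale0r add0r addr0 -cy -bh_sq expr2 -scalerA.
by rewrite -prodZl -prodZr zbh0 prod0r.
Qed.

Lemma b0_neq0 : phi = 0 -> b0 <> 0.
Proof.
move=> phi0 b00; apply: (axis_neq0 axb).
have [_ bh_sq _] := peirce_table; rewrite phi0 expr0n subrr !scale0r addr0 in bh_sq.
have idem : b ** b = b by case: axb.
by rewrite -idem {1 2}lc_b phi0 /lc3 /= b00 scale0r scaler0 !add0r scale1r bh_sq.
Qed.

Lemma lc110_identity : phi = 0 -> is_identity_of mul (gen2 mul a b) (lc 1 1 0).
Proof.
move=> phi0; split; first by rewrite /lc3 /= !scale1r scale0r addr0; apply: gen2_a_b0.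
move=> u /gen2_lc [x [y [z ->]]].
by rewrite prod_lc phi0; apply: lc3_eq; half_field.
Qed.

Lemma lc_idem_phi0 x y z : phi = 0 -> lc x y z ** lc x y z = lc x y z -> lc x y z <> 0 ->
    ~ is_identity_of mul (gen2 mul a b) (lc x y z) ->
  lc x y z = axis_curve z \/ lc x y z = lc 0 1 z.
Proof.
move=> phi0 /(lc_idem_coef (or_introl phi0)) [x01 cy cz] nz nid.
rewrite phi0 subr0 mul1r mul0r addr0 expr2 in cy; rewrite phi0 subr0 mul1r in cz.
have [y01|y01] := scale_idem_coef (b0_neq0 phi0) cy; case: x01 => x01; subst x y.
- by exfalso; apply: nz; rewrite /lc3 /= -cz addr0 !mul0r !scale0r !add0r.
- by left; rewrite /axis_curve phi0 mul0r.
- by right.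
have zbh0 : z *: bh = 0.
  by apply/eqP; move/eqP: cz; rewrite -subr_eq0 -scalerBl mulrDl mul1r addrK.
exfalso; apply: nid; rewrite [lc 1 1 z]/lc3 /= zbh0 addr0 -[_ + _]addr0 -(scale0r bh).
exact: lc110_identity.
Qed.

Lemma peirceh_swap : phi = 0 -> peirceh b a = bh.
Proof.
move=> phi0; have ba : b ** a = lc 0 0 half by rewrite prodC prod_a_b phi0.
have bba : b ** (b ** a) = lc 0 0 (half * half).
  by rewrite ba {1}lc_b prod_lc phi0; apply: lc3_eq; half_field.
rewrite [peirceh b a]/peirceh bba ba lc3B lc3Z -[RHS](lc3_001 a b0).
by apply: lc3_eq; half_field.
Qed.

End TwoAxes.

Lemma lc01_axis_curve_swap a b z : primitive_axis a -> primitive_axis b -> form a b = 0 ->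
  lc3 (a, peirce0 a b, peirceh a b) 0 1 z = axis_curve b a (z - 1).
Proof.
move=> axa axb phi0; rewrite /axis_curve (form_sym_axis b axa) phi0 mul0r.
rewrite (peirceh_swap axa axb phi0) /lc3 /= !scale0r !add0r !addr0 !scale1r.
rewrite [X in _ = X + _](lc_b b axa) phi0 /lc3 /= scale0r add0r !scale1r.
by lc3_of2 (peirce0 a b) (peirceh a b); apply: lc3_eq; ring.
Qed.

Lemma solid_gen2 a b : primitive_axis a -> primitive_axis b ->
  form a b = 0 \/ form a b = 1 -> solid mul (gen2 mul a b).
Proof.
move=> axa axb phi01 c /(gen2_lc axa axb) [x [y [z ->]]] idem nz nid.
case: (phi01) => [phi0|phi1]; last first.
  by rewrite (lc_idem_phi1 axa axb phi1 idem nz); apply: axis_curve_axis.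
case: (lc_idem_phi0 axa axb phi0 idem nz nid) => ->; first exact: axis_curve_axis.
rewrite lc01_axis_curve_swap //; apply: axis_curve_axis => //.
by left; rewrite form_sym_axis.
Qed.

End FrobeniusForm.

End CommutativeAlgebra.

Theorem theorem2 (F : fieldType) (V : lmodType F) (mul : V -> V -> V)
    (form : V -> V -> F) :
  [pchar F] =i pred0 ->
  jordan_half_algebra mul ->
  frobenius mul form ->
  forall a b : V, primitive_axis mul a -> primitive_axis mul b ->
    (form a b = 0 \/ form a b = 1) ->
    solid mul (gen2 mul a b).
Proof.
move=> char0 [commA _] frob a b; exact: solid_gen2.
Qed.
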